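(* Let $\Gamma$ be a totally ordered additive abelian group, $E$ a finite set, and $\nu_{\mathsf{P}}\colon\Delta_E^r\to\overline{\Gamma}$ an $M$-convex function of rank $r$. Let $\widetilde{\nu}_{\mathsf{P}}\colon\Delta_E^{\leq r}\to\overline{\Gamma}$ be $\widetilde{\nu}_{\mathsf{P}}(\alpha)=\min\{\nu_{\mathsf{P}}(\beta)\mid\beta\in\Delta_E^r,\ \alpha_e\leq\beta_e\ \forall e\in E\}$. Let $Q$ be a finite set disjoint from $E$ and $\widetilde{E}=Q\sqcup E$, and identify $\mathbb{Z}^{\widetilde{E}}=\mathbb{Z}^Q\times\mathbb{Z}^E$. Define $\nu_{\widetilde{\mathsf{P}}}\colon\Delta_{\widetilde{E}}^r\to\overline{\Gamma}$ by $\nu_{\widetilde{\mathsf{P}}}((\alpha_Q,\alpha))=\widetilde{\nu}_{\mathsf{P}}(\alpha)$ for every $(\alpha_Q,\alpha)\in\Delta^r_{\widetilde{E}}$ with $\alpha\in\Delta_E^{\leq r}$ and $\alpha_Q\in\Delta_Q^{r-|\alpha|}$. Then $\nu_{\widetilde{\mathsf{P}}}$ is an $M$-convex function of rank $r$ on $\widetilde{E}$.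
   Context: $\overline{\Gamma}=\Gamma\sqcup\{\infty\}$ with $\infty$ larger than every element of $\Gamma$. For $s\in E$, $e_s$ is the standard basis vector of $\mathbb{Z}^E$. $|\alpha|=\sum_e\alpha_e$, $\Delta_E^k=\{\alpha\in\mathbb{Z}^E_{\ge0}\mid|\alpha|=k\}$, $\Delta_E^{\leq r}=\{\alpha\in\mathbb{Z}^E_{\ge 0}\mid |\alpha|\leq r\}$. An $M$-convex function of rank $r$ on $E$ is a map $\nu\colon\Delta_E^r\to\overline{\Gamma}$, not identically $\infty$, such that for all $\alpha,\beta\in\Delta_E^r$ and every $s\in E$ with $\alpha_s>\beta_s$ there is $t\in E$ with $\beta_t>\alpha_t$ and $\nu(\alpha)+\nu(\beta)\geq\nu(\alpha-e_s+e_t)+\nu(\beta-e_t+e_s)$. *)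

From mathcomp Require Import all_boot all_order all_algebra.
Set Implicit Arguments. Unset Strict Implicit. Unset Printing Implicit Defensive.
Import GRing.Theory.
Local Open Scope ring_scope.

Definition ordered_group (G : zmodType) (le : rel G) : Prop :=
  [/\ reflexive le, antisymmetric le, transitive le, total le
    & forall x y z : G, le x y -> le (x + z) (y + z)].

(* Gamma-bar = Gamma ⊔ {oo}, encoded as option G with None = oo. *)
Definition gbar (G : zmodType) := option G.

Definition addbar (G : zmodType) (x y : option G) : option G :=
  match x, y with Some a, Some b => Some (a + b) | _, _ => None end.

Definition lebar (G : zmodType) (le : rel G) (x y : option G) : bool :=
  match x, y with
  | _, None => true
  | None, Some _ => false
  | Some a, Some b => le a b
  end.

Definition minbar (G : zmodType) (le : rel G) (x y : option G) : option G :=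
  if lebar le x y then x else y.

Definition absv (E : finType) (a : {ffun E -> nat}) : nat := (\sum_(e : E) a e)%N.

Definition inDelta (E : finType) (k : nat) (a : {ffun E -> nat}) : bool :=
  absv a == k.

(* M-convex function of rank r on E (values outside Delta_E^r are irrelevant) *)
Definition Mconvex (G : zmodType) (le : rel G) (E : finType) (r : nat)
    (nu : {ffun E -> nat} -> option G) : Prop :=
  (exists a, inDelta r a /\ nu a <> None) /\
  forall a b : {ffun E -> nat}, inDelta r a -> inDelta r b ->
  forall s : E, (b s < a s)%N ->
  exists t : E, (a t < b t)%N /\
    lebar le
      (addbar (nu [ffun e => a e - (e == s) + (e == t)]%N)
              (nu [ffun e => b e - (e == t) + (e == s)]%N))
      (addbar (nu a) (nu b)).

Definition Delta_seq (E : finType) (r : nat) : seq {ffun E -> nat} :=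
  filter (inDelta r)
    (map (fun f : {ffun E -> 'I_r.+1} => [ffun e => nat_of_ord (f e)])
       (enum {: {ffun E -> 'I_r.+1}})).

Definition nutilde (G : zmodType) (le : rel G) (E : finType) (r : nat)
    (nu : {ffun E -> nat} -> option G) (a : {ffun E -> nat}) : option G :=
  foldr (minbar le) None
    [seq nu b | b : {ffun E -> nat} <- Delta_seq E r & [forall e, (a e <= b e)%N]].

Definition nu_ext (G : zmodType) (le : rel G) (Q E : finType) (r : nat)
    (nu : {ffun E -> nat} -> option G) (x : {ffun (Q + E)%type -> nat}) : option G :=
  nutilde le r nu [ffun e => x (inr e)].

(* Write nt for nu-tilde, so that the extended function is x |-> nt (E-part of x).
   For targets c, d a witness pair is a pair (A, B) in Delta_E^r with c <= A, d <= B
   and nu A + nu B <= M; for M = nt c + nt d such a pair exists and M bounds every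
   such sum from below.  The exchange property on Q + E reduces to three exchange
   inequalities for nt: moving a unit from Q into E (when |c| < |d|), swapping inside
   E (when |c| <= |d|), and, when |c| > |d|, swapping inside E or moving a unit out
   of E.  Each is proved by applying the exchange axiom of nu to an optimal witness
   pair: either the exchanged pair already witnesses the wanted inequality, or it is
   again optimal; as the first component of one optimal pair combines with the
   second component of another, this yields an optimal pair at smaller l1-distance,
   and induction on that distance concludes.  In the delicate case of a swap with
   A s = c s and B s = d s, the argument passes through the shifted targets
   (c - s, d + s), keeping the coordinate s frozen. *)

From mathcomp Require Import all_boot all_order all_algebra.
From mathcomp Require Import zify.
Set Implicit Arguments. Unset Strict Implicit. Unset Printing Implicit Defensive.

Lemma ltn_sum (I : finType) (f g : I -> nat) i0 :
  (forall i, f i <= g i) -> f i0 < g i0 -> \sum_i f i < \sum_i g i.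
Proof.
move=> le_fg lt_fg0; rewrite (bigD1 i0) //= [X in _ < X](bigD1 i0) //=.
by rewrite -addSn leq_add // leq_sum.
Qed.

Lemma exists_ltn_sum (I : finType) (f g : I -> nat) :
  \sum_i f i < \sum_i g i -> exists i, f i < g i.
Proof.
move=> lt_fg; apply/existsP; apply: contraLR lt_fg => /existsPn le_gf.
by rewrite -leqNgt; apply: leq_sum => i _; rewrite leqNgt le_gf.
Qed.

Lemma sum_nat_mem (I : finType) (W : {set I}) : \sum_i (i \in W) = #|W|.
Proof. by rewrite -sum1_card [RHS]big_mkcond; apply: eq_bigr => i _; case: (i \in W). Qed.

Lemma sum_nat_eq (I : finType) (i0 : I) : \sum_i (i == i0) = 1.
Proof. by rewrite -(cards1 i0) -sum_nat_mem; apply: eq_bigr => i _; rewrite inE. Qed.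

Lemma exists_ltn_of_absv (I : finType) (x y : {ffun I -> nat}) s :
  absv x = absv y -> y s < x s -> exists t, x t < y t.
Proof.
move=> eq_xy lt_s; apply/existsP; apply: contraT => /existsPn le_yx.
suff : absv y < absv x by rewrite eq_xy ltnn.
by apply: (ltn_sum (i0 := s)) => // t; rewrite leqNgt le_yx.
Qed.

Section OrderedGroupBar.
Variables (G : zmodType) (le : rel G) (HG : ordered_group le).
Local Notation lb := (lebar le).
Local Notation ad := (@addbar G).
Local Open Scope ring_scope.

Lemma lebar_refl x : lb x x.
Proof. by case: HG => le_refl _ _ _ _; case: x => //= a; apply: le_refl. Qed.

Lemma lebar_trans x y z : lb x y -> lb y z -> lb x z.
Proof.
case: HG => _ _ le_trans _ _.
by case: x => [a|]; case: y => [b|]; case: z => [c|] //=; apply: le_trans.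
Qed.

Lemma nlebar_ge x y : ~~ lb x y -> lb y x.
Proof.
case: HG => _ _ _ le_total _.
by case: x => [a|]; case: y => [b|] //=; case/orP: (le_total a b) => ->.
Qed.

Lemma lebar_None x : lb x None.
Proof. by case: x. Qed.

Lemma lebarD x1 y1 x2 y2 : lb x1 y1 -> lb x2 y2 -> lb (ad x1 x2) (ad y1 y2).
Proof.
case: HG => _ _ le_trans _ leD2r.
case: x1 => [a1|]; case: y1 => [b1|]; case: x2 => [a2|]; case: y2 => [b2|] //=.
move=> le_ab1 le_ab2; apply: (le_trans (b1 + a2)); first exact: leD2r.
by rewrite ![b1 + _]GRing.addrC; apply: leD2r.
Qed.

Lemma lebar_addr2 x y c : lb (ad x (Some c)) (ad y (Some c)) -> lb x y.
Proof.
case: HG => _ _ _ _ leD2r.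
by case: x => [a|]; case: y => [b|] //= /(leD2r _ _ (- c)); rewrite !GRing.addrK.
Qed.

Lemma addbar_finite x y M : M <> None -> lb (ad x y) M ->
  exists a b, x = Some a /\ y = Some b.
Proof. by case: M => // M _; case: x => [a|]; case: y => [b|] //= _; exists a, b. Qed.

End OrderedGroupBar.

(* Clearing the non-arithmetic hypotheses keeps lia fast. *)
Ltac vec_lia :=
  rewrite ?ffunE;
  repeat match goal with |- context [?x == ?y] => case: (x =P y) => [?|?]; subst end;
  rewrite ?eqxx /=; intros; try done;
  repeat match goal with H : ?T |- _ => lazymatch T with
    | is_true (leq _ _) => fail | @eq nat _ _ => fail | not _ => fail | _ => clear H end end;
  solve [lia | congruence].

Section Vectors.
Variable E : finType.
Implicit Types (a b c d A B : {ffun E -> nat}) (e s t u v : E).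

Definition vle a b := forall e, a e <= b e.
Definition incr a t := [ffun e => a e + (e == t)].
Definition decr a s := [ffun e => a e - (e == s)].
Definition exch a s t := [ffun e => a e - (e == s) + (e == t)].
Definition dist a b := \sum_e (a e - b e + (b e - a e)).

Lemma absv_incr a t : absv (incr a t) = (absv a).+1.
Proof.
rewrite /absv; under eq_bigr do rewrite ffunE.
by rewrite big_split /= sum_nat_eq addn1.
Qed.

Lemma absv_decr a s : 0 < a s -> (absv (decr a s)).+1 = absv a.
Proof.
move=> a_s; rewrite /absv -addn1 -(sum_nat_eq s) -big_split /=.
by apply: eq_bigr => e _; vec_lia.
Qed.

Lemma exch_incr_decr a s t : exch a s t = incr (decr a s) t.
Proof. by apply/ffunP => e; rewrite !ffunE. Qed.

Lemma incr_decrK a s : 0 < a s -> incr (decr a s) s = a.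
Proof. by move=> a_s; apply/ffunP => e; vec_lia. Qed.

Lemma decr_incrK a s : decr (incr a s) s = a.
Proof. by apply/ffunP => e; vec_lia. Qed.

Lemma decr_incr_exch a s t : t != s -> decr (incr a s) t = exch a t s.
Proof. by move=> ts; apply/ffunP => e; move: ts; vec_lia. Qed.

Lemma absv_exch a s t : 0 < a s -> absv (exch a s t) = absv a.
Proof. by move=> a_s; rewrite exch_incr_decr absv_incr absv_decr. Qed.

Lemma inDelta_exch r a s t : inDelta r a -> 0 < a s -> inDelta r (exch a s t).
Proof. by rewrite /inDelta => a_r a_s; rewrite absv_exch. Qed.

Lemma leq_absv a e : a e <= absv a.
Proof. by rewrite /absv (bigD1 e) //= leq_addr. Qed.

Lemma dist_exchr_lt A B u v : B u < A u -> A v < B v -> dist A (exch B v u) < dist A B.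
Proof. by move=> BAu ABv; apply: (ltn_sum (i0 := u)) => [e|]; vec_lia. Qed.

Lemma dist_exchl_lt A B u v : B u < A u -> A v < B v -> dist (exch A u v) B < dist A B.
Proof. by move=> BAu ABv; apply: (ltn_sum (i0 := u)) => [e|]; vec_lia. Qed.

Lemma dist_exch_le A B u v : B u < A u -> A v < B v ->
  dist (exch A u v) (exch B v u) <= dist A B.
Proof. by move=> BAu ABv; apply: leq_sum => e _; vec_lia. Qed.

End Vectors.

Section SumParts.
Variables (Q E : finType).
Implicit Types (x y : {ffun (Q + E)%type -> nat}) (q : Q) (s t : E).

Definition Qpart x : {ffun Q -> nat} := [ffun q => x (inl q)].
Definition Epart x : {ffun E -> nat} := [ffun e => x (inr e)].

Lemma absv_split x : absv x = absv (Qpart x) + absv (Epart x).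
Proof. by rewrite /absv big_sumType; congr addn; apply: eq_bigr => ? _; rewrite ffunE. Qed.

Lemma Epart_exch_inl x q q' : Epart (exch x (inl q) (inl q')) = Epart x.
Proof. by apply/ffunP => e; rewrite !ffunE /= subn0 addn0. Qed.

Lemma Epart_exch_inl_inr x q t : Epart (exch x (inl q) (inr t)) = incr (Epart x) t.
Proof. by apply/ffunP => e; rewrite !ffunE /= subn0. Qed.

Lemma Epart_exch_inr_inl x s q : Epart (exch x (inr s) (inl q)) = decr (Epart x) s.
Proof. by apply/ffunP => e; rewrite !ffunE /= addn0. Qed.

Lemma Epart_exch_inr x s t : Epart (exch x (inr s) (inr t)) = exch (Epart x) s t.
Proof. by apply/ffunP => e; rewrite !ffunE. Qed.

End SumParts.

Section NuTilde.
Variables (G : zmodType) (le : rel G) (HG : ordered_group le).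
Variables (E : finType) (r : nat) (nu : {ffun E -> nat} -> option G).
Local Notation lb := (lebar le).
Local Notation ad := (@addbar G).
Local Notation vec := {ffun E -> nat}.
Local Notation nt := (nutilde le r nu).

Lemma foldr_minbar_le (T : eqType) (f : T -> option G) (l : seq T) x :
  x \in l -> lb (foldr (minbar le) None [seq f y | y <- l]) (f x).
Proof.
elim: l => // a l IH; rewrite in_cons => /orP[/eqP->|xl] /=; rewrite {1}/minbar.
  by case: ifP => [_|/negbT/(nlebar_ge HG)//]; apply: lebar_refl.
case: ifP => [le_a|_]; last exact: IH.
exact: (lebar_trans HG le_a (IH xl)).
Qed.

Lemma foldr_minbar_mem (T : eqType) (f : T -> option G) (l : seq T) :
  foldr (minbar le) None [seq f y | y <- l] <> None ->
  exists2 x, x \in l & foldr (minbar le) None [seq f y | y <- l] = f x.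
Proof.
elim: l => //= a l IH; rewrite /minbar; case: ifP => _ fin.
  by exists a; rewrite ?mem_head.
by have [x xl ->] := IH fin; exists x; rewrite // in_cons xl orbT.
Qed.

Lemma mem_Delta_seq a : inDelta r a -> a \in Delta_seq E r.
Proof.
move=> a_r; rewrite mem_filter a_r /=.
have a_small e : a e < r.+1 by rewrite ltnS -(eqP a_r) leq_absv.
have -> : a = [ffun e => nat_of_ord ([ffun e => Ordinal (a_small e)] e)].
  by apply/ffunP => e; rewrite !ffunE.
exact/map_f/mem_enum.
Qed.

Lemma nutilde_le c A : inDelta r A -> vle c A -> lb (nt c) (nu A).
Proof.
move=> A_r cA; apply: foldr_minbar_le.
by rewrite mem_filter mem_Delta_seq // andbT; apply/forallP.
Qed.

Lemma nutilde_attained c : nt c <> None ->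
  exists A, [/\ inDelta r A, vle c A & nt c = nu A].
Proof.
move=> /foldr_minbar_mem[A]; rewrite mem_filter => /andP[/forallP cA].
by rewrite mem_filter => /andP[A_r _] ntA; exists A.
Qed.

Definition witness (c d : vec) M (A B : vec) :=
  [/\ inDelta r A, inDelta r B, vle c A, vle d B & lb (ad (nu A) (nu B)) M].

Definition lower_bound (c d : vec) M := forall A B : vec,
  inDelta r A -> inDelta r B -> vle c A -> vle d B -> lb M (ad (nu A) (nu B)).

Definition raise_ok (c d : vec) M t :=
  c t < d t /\ lb (ad (nt (incr c t)) (nt (decr d t))) M.

Definition swap_ok (c d : vec) s M t :=
  c t < d t /\ lb (ad (nt (exch c s t)) (nt (exch d t s))) M.

Lemma witness_nutilde c d M A B : witness c d M A B -> lb (ad (nt c) (nt d)) M.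
Proof.
case=> A_r B_r cA dB; apply: (lebar_trans HG _).
by apply: (lebarD HG); apply: nutilde_le.
Qed.

Lemma lower_bound_nutilde c d : lower_bound c d (ad (nt c) (nt d)).
Proof. by move=> A B A_r B_r cA dB; apply: (lebarD HG); apply: nutilde_le. Qed.

Lemma witness_nutilde_exists c d : ad (nt c) (nt d) <> None ->
  exists A B, witness c d (ad (nt c) (nt d)) A B.
Proof.
move=> fin; have [a [b [nt_c nt_d]]] := addbar_finite fin (lebar_refl HG _).
have [A [A_r cA ->]] : exists A, [/\ inDelta r A, vle c A & nt c = nu A].
  by apply: nutilde_attained; rewrite nt_c.
have [B [B_r dB ->]] : exists B, [/\ inDelta r B, vle d B & nt d = nu B].
  by apply: nutilde_attained; rewrite nt_d.
by exists A, B; split=> //; apply: lebar_refl.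
Qed.

(* With M a finite lower bound both pairs attain M, so cancelling nu B1 gives
   nu A1 <= nu A. *)
Lemma witness_mix c d M A B A1 B1 : M <> None -> lower_bound c d M ->
  witness c d M A B -> witness c d M A1 B1 -> witness c d M A1 B.
Proof.
move=> M_fin lowM [A_r B_r cA dB AB_M] [A1_r B1_r cA1 dB1 AB1_M]; split=> //.
have [a1 [b1 [nuA1 nuB1]]] := addbar_finite M_fin AB1_M.
have le_A1A : lb (nu A1) (nu A).
  apply: (@lebar_addr2 _ _ HG _ _ b1); rewrite -nuB1.
  exact: (lebar_trans HG AB1_M (lowM _ _ A_r B1_r cA dB1)).
by apply: (lebar_trans HG _ AB_M); apply: (lebarD HG le_A1A (lebar_refl HG _)).
Qed.

Hypothesis nu_exch : forall A B : vec, inDelta r A -> inDelta r B ->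
  forall u, B u < A u ->
  exists v, A v < B v /\ lb (ad (nu (exch A u v)) (nu (exch B v u))) (ad (nu A) (nu B)).

Lemma witness_exch c d M A B u : witness c d M A B -> B u < A u ->
  exists v, A v < B v /\
    [/\ inDelta r (exch A u v), inDelta r (exch B v u)
      & lb (ad (nu (exch A u v)) (nu (exch B v u))) M].
Proof.
case=> A_r B_r _ _ AB_M BAu; have [v [ABv le_v]] := nu_exch A_r B_r BAu.
exists v; split=> //; split; try (apply: inDelta_exch => //; lia).
exact: (lebar_trans HG le_v AB_M).
Qed.

(* The second alternative occurs only when an
   exchange lands on a frozen coordinate s; it then reports a witness pair for the
   targets (c + s, d - s) that is closer than (A, B) or one exchange away from it. *)
Lemma raise_descent (c d : vec) (Z W : {set E}) M A B :
  M <> None -> lower_bound c d M -> absv c + #|W| < absv d ->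
  witness c d M A B -> {in Z, forall e, A e = c e} ->
  {in W, forall e, A e + d e <= B e + c e + 1} ->
  (exists2 t, t \notin Z & raise_ok c d M t) \/
  exists2 s, s \in Z & exists A1 B1, witness (incr c s) (decr d s) M A1 B1 /\
    (dist A1 B1 < dist A B \/
     exists u, [/\ u \notin W, B u < A u, A s < B s, A1 = exch A u s & B1 = exch B s u]).
Proof.
move=> M_fin lowM; have [n] := ubnP (dist A B).
elim: n W A B => // n IH W A B lt_dist lt_cd wAB AZ AW.
have [A_r B_r cA dB AB_M] := wAB.
have [u lt_u] : exists u, B u + c u + (u \in W) < A u + d u.
  apply: exists_ltn_sum; rewrite !big_split /= sum_nat_mem.
  by rewrite -/(absv A) -/(absv B) -/(absv c) -/(absv d) (eqP A_r) (eqP B_r); lia.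
have uW : u \notin W by apply: contraTN lt_u => uW; rewrite uW -leqNgt; apply: AW.
rewrite (negbTE uW) addn0 in lt_u.
have cAu : c u < A u by have := dB u; lia.
have uZ : u \notin Z by apply: contraTN cAu => /AZ ->; rewrite ltnn.
case: (ltnP (c u) (d u)) => [cdu | dcu].
  left; exists u => //; split=> //; apply: (witness_nutilde (A := A) (B := B)).
  by split=> // e; move: (cA e) (dB e); vec_lia.
have BAu : B u < A u by lia.
have [v [ABv [A'_r B'_r AB'_M]]] := witness_exch wAB BAu.
case: (ltnP (c v) (d v)) => [cdv | dcv].
  have wAB' : witness (incr c v) (decr d v) M (exch A u v) (exch B v u).
    by split=> // e; move: (cA e) (dB e); vec_lia.
  case: (boolP (v \in Z)) => vZ.
    right; exists v => //; exists (exch A u v), (exch B v u); split=> //.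
    by right; exists u.
  by left; exists v => //; split=> //; apply: witness_nutilde wAB'.
have wAB2 : witness c d M A (exch B v u).
  apply: (witness_mix M_fin lowM (A := exch A u v) _ wAB).
  by split=> // e; move: (cA e) (dB e); vec_lia.
have lt_dist2 := dist_exchr_lt BAu ABv.
have lt_n : dist A (exch B v u) < n by apply: leq_trans lt_dist2 _; rewrite -ltnS.
have lt_cd0 : absv c + #|@set0 E| < absv d by rewrite cards0 addn0; lia.
have AW0 : {in set0, forall e, A e + d e <= exch B v u e + c e + 1}.
  by move=> e; rewrite inE.
have [raise | [s sZ [A1 [B1 [wAB1 progress]]]]] := IH set0 A _ lt_n lt_cd0 wAB2 AZ AW0.
  by left.
right; exists s => //; exists A1, B1; split=> //; left.
case: progress => [lt_1 | [u' [_ Bu' As' -> ->]]]; first exact: ltn_trans lt_1 lt_dist2.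
exact: leq_ltn_trans (dist_exch_le Bu' As') lt_dist2.
Qed.

Lemma raise_exchange (c d : vec) : absv c < absv d -> ad (nt c) (nt d) <> None ->
  exists t, raise_ok c d (ad (nt c) (nt d)) t.
Proof.
move=> lt_cd fin; have [A [B wAB]] := witness_nutilde_exists fin.
have lt_cd0 : absv c + #|@set0 E| < absv d by rewrite cards0 addn0.
have AZ : {in set0, forall e, A e = c e} by move=> e; rewrite inE.
have AW : {in set0, forall e, A e + d e <= B e + c e + 1} by move=> e; rewrite inE.
have [[t _ raise] | [s]] := raise_descent fin (@lower_bound_nutilde c d) lt_cd0 wAB AZ AW.
  by exists t.
by rewrite inE.
Qed.

Lemma swap_ok_of_raise_ok (c d : vec) s M t : t != s ->
  raise_ok (decr c s) (incr d s) M t -> swap_ok c d s M t.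
Proof.
move=> ts [cdt le_t]; split; first by move: cdt ts; vec_lia.
by rewrite exch_incr_decr -decr_incr_exch.
Qed.

Lemma swap_descent (c d : vec) s M A B :
  M <> None -> lower_bound c d M -> lower_bound (decr c s) (incr d s) M ->
  d s < c s -> absv c <= absv d -> witness c d M A B ->
  exists t, swap_ok c d s M t.
Proof.
move=> M_fin lowM lowM' dcs le_cd; have [n] := ubnP (dist A B).
elim: n A B => // n IH A B lt_dist wAB; have [A_r B_r cA dB AB_M] := wAB.
have closer A1 B1 : witness c d M A1 B1 -> dist A1 B1 < dist A B ->
    exists t, swap_ok c d s M t.
  by move=> wAB1 lt1; apply: IH wAB1; apply: leq_trans lt1 _; rewrite -ltnS.
have found A1 B1 t : c t < d t -> witness (exch c s t) (exch d t s) M A1 B1 ->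
    exists t, swap_ok c d s M t.
  by move=> cdt wAB1; exists t; split=> //; apply: witness_nutilde wAB1.
case: (ltnP (d s) (B s)) => [dBs | Bds].
  have [u lt_u] : exists u, B u + c u < A u + d u + (u == s).
    apply: exists_ltn_sum; rewrite !big_split /= sum_nat_eq.
    by rewrite -/(absv A) -/(absv B) -/(absv c) -/(absv d) (eqP A_r) (eqP B_r); lia.
  have cAu : c u < A u by move: lt_u (dB u); vec_lia.
  case: (ltnP (c u) (d u)) => [cdu | dcu].
    by apply: (found A B u cdu); split=> // e; move: (cA e) (dB e); vec_lia.
  have BAu : B u < A u by move: lt_u; vec_lia.
  have [v [ABv [A'_r B'_r AB'_M]]] := witness_exch wAB BAu.
  case: (ltnP (c v) (d v)) => [cdv | dcv].
    apply: (found (exch A u v) (exch B v u) v cdv).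
    by split=> // e; move: (cA e) (dB e); vec_lia.
  apply: (closer A (exch B v u)); last exact: dist_exchr_lt.
  apply: (witness_mix M_fin lowM (A := exch A u v) _ wAB).
  by split=> // e; move: (cA e) (dB e); vec_lia.
have BAs : B s < A s by have := cA s; lia.
have [t0 [ABt0 [A'_r B'_r AB'_M]]] := witness_exch wAB BAs.
case: (ltnP (c t0) (d t0)) => [cdt0 | dct0].
  apply: (found (exch A s t0) (exch B t0 s) t0 cdt0).
  by split=> // e; move: (cA e) (dB e); vec_lia.
case: (ltnP (c s) (A s)) => [cAs | Acs].
  apply: (closer A (exch B t0 s)); last exact: dist_exchr_lt.
  apply: (witness_mix M_fin lowM (A := exch A s t0) _ wAB).
  by split=> // e; move: (cA e) (dB e); vec_lia.
(* Now A s = c s and B s = d s: pass to the targets (c - s, d + s) with s frozen. *)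
have wAB' : witness (decr c s) (incr d s) M (exch A s t0) (exch B t0 s).
  by split=> // e; move: (cA e) (dB e); vec_lia.
have As : {in [set s], forall e, exch A s t0 e = decr c s e}.
  by move=> e /set1P ->; move: (cA s); vec_lia.
have At0 : {in [set t0], forall e,
    exch A s t0 e + incr d s e <= exch B t0 s e + decr c s e + 1}.
  by move=> e /set1P ->; vec_lia.
have lt_cd' : absv (decr c s) + #|[set t0]| < absv (incr d s).
  by rewrite cards1 absv_incr; have := absv_decr (a := c) (s := s); lia.
have [[t ts raise] | [s' /set1P-> [A1 [B1 [wAB1 progress]]]]] :=
  raise_descent M_fin lowM' lt_cd' wAB' As At0.
  by exists t; apply: swap_ok_of_raise_ok raise; rewrite in_set1 in ts.
rewrite incr_decrK ?decr_incrK in wAB1; last exact: leq_ltn_trans dcs.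
case: progress wAB1 => [lt1 | [u [ut0 Bu As' -> ->]]] wAB1.
  by apply: (closer A1 B1 wAB1); apply: leq_trans lt1 (dist_exch_le BAs ABt0).
rewrite in_set1 in ut0.
have A1E : exch (exch A s t0) u s = exch A u t0.
  by apply/ffunP => e; move: Bu As' ut0; vec_lia.
rewrite A1E in wAB1; apply: (closer _ _ (witness_mix M_fin lowM wAB wAB1)).
by apply: dist_exchl_lt ABt0; move: Bu As' ut0; vec_lia.
Qed.

Lemma swap_exchange (c d : vec) s : d s < c s -> absv c <= absv d ->
  ad (nt c) (nt d) <> None -> exists t, swap_ok c d s (ad (nt c) (nt d)) t.
Proof.
set M := ad (nt c) (nt d); set W := ad (nt (decr c s)) (nt (incr d s)).
move=> dcs le_cd fin; have lowM : lower_bound c d M by apply: lower_bound_nutilde.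
have [A [B wAB]] := witness_nutilde_exists fin.
have [MW | WM] := boolP (lb M W).
  apply: (swap_descent fin lowM _ dcs le_cd wAB) => A1 B1 A1_r B1_r cA1 dB1.
  exact: (lebar_trans HG MW (lower_bound_nutilde A1_r B1_r cA1 dB1)).
have W_fin : W <> None by move=> W_oo; rewrite W_oo lebar_None in WM.
have [A' [B' wAB']] := witness_nutilde_exists W_fin.
have [A'_r B'_r cA' dB' AB'_W] := wAB'.
(* An optimal pair for the shifted targets is tight at s, as otherwise it would
   witness M <= W. *)
have A's : {in [set s], forall e, A' e = decr c s e}.
  move=> e /set1P ->; apply/eqP; rewrite eqn_leq cA' andbT ffunE eqxx leqNgt.
  apply: contra WM => lt_s; apply: (lebar_trans HG _ AB'_W).
  by apply: lower_bound_nutilde => // x; move: (cA' x) (dB' x); vec_lia.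
have lt_cd' : absv (decr c s) + #|@set0 E| < absv (incr d s).
  by rewrite cards0 addn0 absv_incr; have := absv_decr (a := c) (s := s); lia.
have AW : {in set0, forall e, A' e + incr d s e <= B' e + decr c s e + 1}.
  by move=> e; rewrite inE.
have [[t ts [cdt le_t]] | [s' /set1P-> [A1 [B1 [wAB1 _]]]]] :=
  raise_descent W_fin (@lower_bound_nutilde _ _) lt_cd' wAB' A's AW.
  exists t; apply: swap_ok_of_raise_ok; first by rewrite in_set1 in ts.
  by split=> //; exact: (lebar_trans HG le_t (nlebar_ge HG WM)).
rewrite incr_decrK ?decr_incrK in wAB1; last exact: leq_ltn_trans dcs.
by move: WM; rewrite (witness_nutilde wAB1).
Qed.

Lemma swap_or_shift (c d : vec) s : d s < c s -> ad (nt c) (nt d) <> None ->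
  (exists t, swap_ok c d s (ad (nt c) (nt d)) t) \/
  lb (ad (nt (decr c s)) (nt (incr d s))) (ad (nt c) (nt d)).
Proof.
move=> dcs fin; have [A [B wAB]] := witness_nutilde_exists fin.
have [A_r B_r cA dB AB_M] := wAB.
case: (ltnP (d s) (B s)) => [dBs | Bds].
  right; apply: (witness_nutilde (A := A) (B := B)).
  by split=> // e; move: (cA e) (dB e); vec_lia.
have BAs : B s < A s by have := cA s; lia.
have [t [ABt [A'_r B'_r AB'_M]]] := witness_exch wAB BAs.
have [cdt | dct] := ltnP (c t) (d t); [left; exists t; split=> // | right];
  apply: (witness_nutilde (A := exch A s t) (B := exch B t s));
  by split=> // e; move: (cA e) (dB e); vec_lia.
Qed.

Variable Q : finType.
Local Notation nu' := (@nu_ext G le Q E r nu).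

Lemma nu_ext_exchange x y : inDelta r x -> inDelta r y -> forall s, y s < x s ->
  exists t, x t < y t /\ lb (ad (nu' (exch x s t)) (nu' (exch y t s))) (ad (nu' x) (nu' y)).
Proof.
move=> x_r y_r s lt_s.
have sum_x := absv_split x; have sum_y := absv_split y.
rewrite (eqP x_r) in sum_x; rewrite (eqP y_r) in sum_y.
suff ext : exists t, x t < y t /\ lb (ad (nt (Epart (exch x s t))) (nt (Epart (exch y t s))))
                                     (ad (nt (Epart x)) (nt (Epart y))).
  exact: ext.
set c := Epart x in sum_x *; set d := Epart y in sum_y *.
have [oo | /eqP fin] := eqVneq (ad (nt c) (nt d)) None.
  have [t lt_t] := exists_ltn_of_absv (etrans (eqP x_r) (esym (eqP y_r))) lt_s.
  by exists t; rewrite oo lebar_None.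
case: s lt_s => [q | s] lt_s.
  have [/existsP[q' lt_q'] | /existsPn no_q] := boolP [exists q', x (inl q') < y (inl q')].
    by exists (inl q'); rewrite !Epart_exch_inl lebar_refl.
  have lt_cd : absv c < absv d.
    suff : absv (Qpart y) < absv (Qpart x) by lia.
    by apply: (ltn_sum (i0 := q)) => [q'|]; rewrite !ffunE // leqNgt no_q.
  have [t [lt_t le_t]] := raise_exchange lt_cd fin.
  exists (inr t); rewrite Epart_exch_inl_inr Epart_exch_inr_inl.
  by move: lt_t; rewrite !ffunE.
have dcs : d s < c s by rewrite !ffunE.
have swap t : swap_ok c d s (ad (nt c) (nt d)) t -> exists t, x t < y t /\
    lb (ad (nt (Epart (exch x (inr s) t))) (nt (Epart (exch y t (inr s))))) (ad (nt c) (nt d)).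
  by case=> lt_t le_t; exists (inr t); rewrite !Epart_exch_inr; move: lt_t; rewrite !ffunE.
have [le_cd | lt_dc] := leqP (absv c) (absv d).
  by have [t ok] := swap_exchange dcs le_cd fin; apply: swap ok.
have [[t ok] | le_shift] := swap_or_shift dcs fin; first exact: swap ok.
have [q lt_q] : exists q, Qpart x q < Qpart y q.
  by apply: exists_ltn_sum; change (absv (Qpart x) < absv (Qpart y)); lia.
exists (inl q); rewrite Epart_exch_inr_inl Epart_exch_inl_inr.
by move: lt_q; rewrite !ffunE.
Qed.

End NuTilde.

Theorem proposition1p3 (G : zmodType) (le : rel G) (HG : ordered_group le)
    (E Q : finType) (r : nat) (nu : {ffun E -> nat} -> option G) :
  Mconvex le r nu ->
  Mconvex le r (@nu_ext G le Q E r nu).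
Proof.
case=> [[a [a_r nu_a]] nu_exch]; split; last first.
  by move=> x y x_r y_r s lt_s; apply: (nu_ext_exchange HG nu_exch x_r y_r lt_s).
pose x : {ffun (Q + E)%type -> nat} := [ffun z => if z is inr e then a e else 0].
have Ex : Epart x = a by apply/ffunP => e; rewrite !ffunE.
exists x; split; first by rewrite /inDelta absv_split Ex /absv big1 // => q _; rewrite !ffunE.
rewrite /nu_ext -/(Epart x) Ex => nt_oo.
by move: (nutilde_le HG nu a_r (fun e => leqnn (a e))); rewrite nt_oo; case: (nu a) nu_a.
Qed.
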